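(* Let $g\in L^1([0,1])$ with $g\ge 0$, let $m\in\mathbb{N}$, $A\in D_m$, and $\lambda\in(0,1)$. Then there exists an integer $n_\lambda>m$ such that for every $n\ge n_\lambda$ there are sets $A_0,A_1\in D_n$ with $A=A_0\cup A_1$ (disjoint) satisfying: (1) $\mu(A_0)=\mu(A_1)=\tfrac12\mu(A)$; (2) $\tfrac{\lambda}{2}\int_A g\,d\mu\le\int_{A_i}g\,d\mu\le\tfrac{1}{2\lambda}\int_A g\,d\mu$ for $i=0,1$; (3) $r_n\equiv(-1)^i$ on $A_i$ for $i=0,1$.
   Context: $\mu$ is Lebesgue measure on $[0,1]$. $r_n(x)=\operatorname{sign}(\sin(2^n\pi x))$ are the Rademacher functions. For $m\in\mathbb{N}$, $D_m$ denotes the family of all sets $A\subset[0,1]$ that are finite unions of dyadic intervals $[j/2^m,(j+1)/2^m)$, $j\in\{0,\dots,2^m-1\}$. *)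

From Stdlib Require Import Reals Lra List.
Open Scope R_scope.

Definition interval_cover (E : R -> Prop) (a b : nat -> R) : Prop :=
  (forall k, a k <= b k) /\ (forall x, E x -> exists k, a k <= x <= b k).

Definition cover_total (a b : nat -> R) (s : R) : Prop :=
  Un_cv (fun n => sum_f_R0 (fun k => b k - a k) n) s.

Definition outer_measure_is (E : R -> Prop) (r : R) : Prop :=
  (forall eps, 0 < eps -> exists a b s,
      interval_cover E a b /\ cover_total a b s /\ s <= r + eps) /\
  (forall a b s, interval_cover E a b -> cover_total a b s -> r <= s).

(** Caratheodory (= Lebesgue) measurability.  Test sets of infinite outer
    measure impose no condition, so only finite ones are tested. *)
Definition lebesgue_measurable (E : R -> Prop) : Prop :=
  forall T r, outer_measure_is T r ->
    exists r1 r2, outer_measure_is (fun x => T x /\ E x) r1 /\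
                  outer_measure_is (fun x => T x /\ ~ E x) r2 /\ r1 + r2 = r.

Definition measure_is (E : R -> Prop) (r : R) : Prop :=
  lebesgue_measurable E /\ outer_measure_is E r.

Definition unit_interval (x : R) : Prop := 0 <= x <= 1.

Definition measurable_on01 (g : R -> R) : Prop :=
  forall c, lebesgue_measurable (fun x => unit_interval x /\ c < g x).

(** Value of a pointwise sum  sum_i c_i 1_{E_i}(x)  of a simple function
    given as a list of (coefficient, set, measure of set). *)
Definition simple_eval (l : list (R * (R -> bool) * R)) (x : R) : R :=
  fold_right (fun (p : R * (R -> bool) * R) (acc : R) => (if snd (fst p) x then fst (fst p) else 0) + acc) 0 l.

Definition simple_integral (l : list (R * (R -> bool) * R)) : R :=
  fold_right (fun (p : R * (R -> bool) * R) (acc : R) => fst (fst p) * snd p + acc) 0 l.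

Definition simple_below (g : R -> R) (A : R -> Prop) (v : R) : Prop :=
  exists l : list (R * (R -> bool) * R),
    Forall (fun p => 0 <= fst (fst p) /\
                     measure_is (fun x => snd (fst p) x = true) (snd p) /\
                     (forall x, snd (fst p) x = true -> A x)) l /\
    (forall x, A x -> simple_eval l x <= g x) /\
    simple_integral l = v.

Definition integral_is (g : R -> R) (A : R -> Prop) (v : R) : Prop :=
  is_lub (simple_below g A) v.

Definition nonneg_L1_01 (g : R -> R) : Prop :=
  measurable_on01 g /\ (forall x, unit_interval x -> 0 <= g x) /\
  exists v, integral_is g unit_interval v.

Definition dyadic_family (m : nat) (A : R -> Prop) : Prop :=
  exists J : nat -> Prop, forall x,
    A x <-> exists j : nat, (j < 2 ^ m)%nat /\ J j /\
              INR j / 2 ^ m <= x < (INR j + 1) / 2 ^ m.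

Definition sgn (s : R) : R :=
  if Rlt_dec 0 s then 1 else if Rlt_dec s 0 then -1 else 0.

Definition rademacher (n : nat) (x : R) : R := sgn (sin (2 ^ n * PI * x)).

(* A0 and A1 collect the even- and odd-numbered dyadic cells of level n inside A.  For n > m
   the odd cells of A are the even ones translated by 2^-n, so both halves have measure
   mu(A)/2, and r_n = (-1)^j on the interior of the j-th cell, so (3) fails only at dyadic
   points.  For (2), take a simple function below g on A with integral above
   (1 + lam)/2 * int_A g.  Covering each of its finitely many level sets E by finitely many
   intervals up to a small error shows that, for n large, the alternating cells of level n
   meet E in about half of its measure; restricting the simple function to A_i therefore
   gives int_{A_i} g >= lam/2 * int_A g.  Superadditivity of the integral then yields
   int_{A_i} g <= (1 - lam/2) int_A g <= int_A g / (2 lam). *)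

From Stdlib Require Import Reals Lra Lia List Classical ClassicalEpsilon
  FunctionalExtensionality PropExtensionality ZArith.
Open Scope R_scope.

Lemma nonneg_series_bounded_cv (f : nat -> R) B : (forall k, 0 <= f k) ->
  (forall n, sum_f_R0 f n <= B) -> exists s, Un_cv (sum_f_R0 f) s /\ s <= B.
Proof.
  intros Hf HB.
  assert (Hgrow : Un_growing (sum_f_R0 f)) by (intros n; simpl; specialize (Hf (S n)); lra).
  destruct (growing_cv _ Hgrow) as [s Hs]; [exists B; intros x [n ->]; apply HB|].
  exists s; split; auto.
  apply Rnot_lt_le; intros HBs.
  destruct (Hs (s - B)) as [N HN]; [lra|].
  specialize (HN N (le_n _)); specialize (HB N).
  unfold Rdist in HN; apply Rabs_def2 in HN; lra.
Qed.

Lemma sum_f_R0_le_mono (f : nat -> R) n m : (forall k, 0 <= f k) -> (n <= m)%nat ->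
  sum_f_R0 f n <= sum_f_R0 f m.
Proof. intros Hf Hnm; induction Hnm; [lra|]. simpl. specialize (Hf (S m)); lra. Qed.

(** * Outer measure through interval covers *)

Definition cover_le (E : R -> Prop) (B : R) : Prop :=
  exists a b, interval_cover E a b /\ forall n, sum_f_R0 (fun k => b k - a k) n <= B.

Lemma cover_le_nonneg E B : cover_le E B -> 0 <= B.
Proof.
  intros (a & b & [Hab _] & H). specialize (H 0%nat). specialize (Hab 0%nat). simpl in H. lra.
Qed.

Lemma cover_le_weaken E B B' : cover_le E B -> B <= B' -> cover_le E B'.
Proof. intros (a & b & Hc & H) HB. exists a, b. split; auto. intros n; specialize (H n); lra. Qed.

Lemma cover_le_subset E F B : (forall x, E x -> F x) -> cover_le F B -> cover_le E B.
Proof. intros HST (a & b & [Hab Hc] & H). exists a, b. repeat split; auto. Qed.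

Lemma cover_le_interval a b : a <= b -> cover_le (fun x => a <= x <= b) (b - a).
Proof.
  intros Hab. exists (fun _ => a), (fun k => match k with O => b | _ => a end).
  repeat split.
  - intros [|k]; lra.
  - intros x Hx. exists O. lra.
  - intros n. induction n; simpl; lra.
Qed.

Lemma cover_le_empty E : (forall x, ~ E x) -> cover_le E 0.
Proof.
  intros H. apply (cover_le_subset E (fun x => 0 <= x <= 0)).
  - intros x Hx; exfalso; eapply H; eauto.
  - apply (cover_le_weaken _ (0 - 0)); [apply cover_le_interval|]; lra.
Qed.

Definition interleave (u v : nat -> R) (k : nat) : R :=
  if Nat.even k then u (Nat.div2 k) else v (Nat.div2 k).

Lemma interleave_double u v k : interleave u v (2 * k) = u k.
Proof. unfold interleave. rewrite Nat.even_even, Nat.div2_double. reflexivity. Qed.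

Lemma interleave_succ_double u v k : interleave u v (S (2 * k)) = v k.
Proof.
  unfold interleave. rewrite Nat.div2_succ_double, Nat.even_succ, Nat.odd_mul. reflexivity.
Qed.

Lemma cover_le_union E F B1 B2 : cover_le E B1 -> cover_le F B2 ->
  cover_le (fun x => E x \/ F x) (B1 + B2).
Proof.
  intros (a1 & b1 & [Hab1 Hc1] & H1) (a2 & b2 & [Hab2 Hc2] & H2).
  set (len := fun k => interleave b1 b2 k - interleave a1 a2 k).
  assert (Hlen : forall k, 0 <= len k).
  { intros k; unfold len, interleave.
    destruct (Nat.even k); [specialize (Hab1 (Nat.div2 k))|specialize (Hab2 (Nat.div2 k))]; lra. }
  exists (interleave a1 a2), (interleave b1 b2). repeat split.
  - intros k; specialize (Hlen k); unfold len in Hlen; lra.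
  - intros x [Hx|Hx].
    + destruct (Hc1 x Hx) as [k Hk]. exists (2 * k)%nat. rewrite !interleave_double. exact Hk.
    + destruct (Hc2 x Hx) as [k Hk]. exists (S (2 * k)).
      rewrite !interleave_succ_double. exact Hk.
  - intros n. fold len.
    apply Rle_trans with (sum_f_R0 len (2 * S n)).
    { apply sum_f_R0_le_mono; auto; lia. }
    rewrite <- sum_decomposition.
    rewrite (sum_eq (fun l => len (2 * l)%nat) (fun l => b1 l - a1 l)),
            (sum_eq (fun l => len (S (2 * l))) (fun l => b2 l - a2 l)).
    + specialize (H1 (S n)); specialize (H2 n); lra.
    + intros l _; unfold len; rewrite !interleave_succ_double; reflexivity.
    + intros l _; unfold len; rewrite !interleave_double; reflexivity.
Qed.

Lemma cover_le_shift E B t : cover_le E B -> cover_le (fun x => E (x - t)) B.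
Proof.
  intros (a & b & [Hab Hc] & H). exists (fun k => a k + t), (fun k => b k + t).
  repeat split.
  - intros k; specialize (Hab k); lra.
  - intros x Hx. destruct (Hc _ Hx) as [k Hk]. exists k. lra.
  - intros n. rewrite (sum_eq _ (fun k => b k - a k)); auto. intros k _; lra.
Qed.

Lemma cover_le_finite_union (F : nat -> R -> Prop) (c : nat -> R) K :
  (forall k, cover_le (F k) (c k)) ->
  cover_le (fun x => exists k, (k <= K)%nat /\ F k x) (sum_f_R0 c K).
Proof.
  intros H. induction K as [|K IH].
  - apply (cover_le_subset _ (F O)); auto. intros x [k [Hk Hx]].
    replace k with O in Hx by lia. exact Hx.
  - apply (cover_le_subset _ (fun x => (exists k, (k <= K)%nat /\ F k x) \/ F (S K) x)).
    + intros x [k [Hk Hx]]. destruct (Nat.eq_dec k (S K)) as [->|Hne]; [now right|].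
      left. exists k. split; [lia|exact Hx].
    + apply cover_le_union; auto.
Qed.

Lemma cover_le_tail a b s K : (forall k, a k <= b k) ->
  Un_cv (sum_f_R0 (fun k => b k - a k)) s ->
  cover_le (fun x => exists k, (K < k)%nat /\ a k <= x <= b k)
    (s - sum_f_R0 (fun k => b k - a k) K).
Proof.
  intros Hab Hs. exists (fun k => a (S K + k)%nat), (fun k => b (S K + k)%nat).
  split; [split|].
  - intros k; auto.
  - intros x [k [Hk Hx]]. exists (k - S K)%nat. replace (S K + (k - S K))%nat with k by lia.
    exact Hx.
  - intros n. pose proof (tech2 (fun k => b k - a k) K (n + S K) ltac:(lia)) as Hsplit.
    replace (n + S K - S K)%nat with n in Hsplit by lia.
    assert (sum_f_R0 (fun k => b k - a k) (n + S K) <= s).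
    { apply sum_incr; auto. intros k; specialize (Hab k); lra. }
    lra.
Qed.

Definition is_cover_inf (E : R -> Prop) (r : R) : Prop :=
  (forall B, cover_le E B -> r <= B) /\ (forall eps, 0 < eps -> cover_le E (r + eps)).

Lemma is_cover_inf_unique E r1 r2 : is_cover_inf E r1 -> is_cover_inf E r2 -> r1 = r2.
Proof.
  intros [H1 H1'] [H2 H2'].
  assert (r1 <= r2) by (apply Rle_plus_epsilon; intros; apply H1, H2'; auto).
  assert (r2 <= r1) by (apply Rle_plus_epsilon; intros; apply H2, H1'; auto). lra.
Qed.

Lemma outer_measure_isE E r : outer_measure_is E r <-> is_cover_inf E r.
Proof.
  assert (Hlen : forall a b, interval_cover E a b -> forall k, 0 <= b k - a k)
    by (intros a b [Hab _] k; specialize (Hab k); lra).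
  split; intros [H1 H2]; split.
  - intros B (a & b & Hc & Hs).
    destruct (nonneg_series_bounded_cv _ B (Hlen a b Hc) Hs) as (s & Hcv & HsB).
    specialize (H2 a b s Hc Hcv). lra.
  - intros eps Heps. destruct (H1 eps Heps) as (a & b & s & Hc & Hcv & Hs).
    exists a, b. split; auto. intros n.
    pose proof (sum_incr _ n s Hcv (Hlen a b Hc)). lra.
  - intros eps Heps. destruct (H2 eps Heps) as (a & b & Hc & Hs).
    destruct (nonneg_series_bounded_cv _ _ (Hlen a b Hc) Hs) as (s & Hcv & HsB).
    exists a, b, s. auto.
  - intros a b s Hc Hcv. apply H1. exists a, b. split; auto. intros n.
    exact (sum_incr _ n s Hcv (Hlen a b Hc)).
Qed.

Lemma neg_cover_bound E : bound (fun y => cover_le E (- y)).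
Proof. exists 0. intros y Hy. apply cover_le_nonneg in Hy. lra. Qed.

Lemma neg_cover_inhabited E : (exists B, cover_le E B) -> exists y, cover_le E (- y).
Proof. intros [B HB]. exists (- B). rewrite Ropp_involutive. exact HB. Qed.

(* Sets with no cover of finite total length get the junk value 0. *)
Definition outer_measure (E : R -> Prop) : R :=
  match excluded_middle_informative (exists B, cover_le E B) with
  | left H => - proj1_sig (completeness _ (neg_cover_bound E) (neg_cover_inhabited E H))
  | right _ => 0
  end.

Lemma outer_measure_spec E B : cover_le E B -> is_cover_inf E (outer_measure E).
Proof.
  intros HB. unfold outer_measure.
  destruct excluded_middle_informative as [H|H]; [|exfalso; eauto].
  destruct completeness as [y [Hub Hlub]]. simpl. split.
  - intros B' HB'. assert (- B' <= y); [|lra]. apply Hub. rewrite Ropp_involutive; auto.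
  - intros eps Heps. apply NNPP. intros Hn.
    assert (y <= y - eps); [|lra]. apply Hlub. intros z Hz.
    apply Rnot_lt_le. intros Hzy. apply Hn.
    apply (cover_le_weaken _ (- z)); auto. lra.
Qed.

Lemma outer_measure_le E B : cover_le E B -> outer_measure E <= B.
Proof. intros H. apply (proj1 (outer_measure_spec E B H)). auto. Qed.

Lemma outer_measure_approx E B eps : cover_le E B -> 0 < eps ->
  cover_le E (outer_measure E + eps).
Proof. intros H He. apply (proj2 (outer_measure_spec E B H)). auto. Qed.

Lemma outer_measure_is_outer_measure E B : cover_le E B -> outer_measure_is E (outer_measure E).
Proof. intros H. apply outer_measure_isE. eapply outer_measure_spec; eauto. Qed.

Lemma outer_measure_is_cover_le E r : outer_measure_is E r -> cover_le E (r + 1).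
Proof. intros H. apply outer_measure_isE in H. apply H. lra. Qed.

Lemma outer_measure_is_unique E r : outer_measure_is E r -> r = outer_measure E.
Proof.
  intros H. pose proof (outer_measure_is_cover_le E r H) as Hc.
  apply outer_measure_isE in H. exact (is_cover_inf_unique E _ _ H (outer_measure_spec E _ Hc)).
Qed.

Lemma outer_measure_mono E F B : (forall x, E x -> F x) -> cover_le F B ->
  outer_measure E <= outer_measure F.
Proof.
  intros HEF HF. apply Rle_plus_epsilon. intros eps He. apply outer_measure_le.
  apply (cover_le_subset E F); auto. apply (outer_measure_approx F B); auto.
Qed.

Lemma pred_ext (E F : R -> Prop) : (forall x, E x <-> F x) -> E = F.
Proof.
  intros H. apply functional_extensionality. intros x.
  apply propositional_extensionality. apply H.
Qed.

Lemma outer_measure_shift E B t : cover_le E B ->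
  outer_measure (fun x => E (x - t)) = outer_measure E.
Proof.
  intros HB.
  apply Rle_antisym; apply Rle_plus_epsilon; intros eps He; apply outer_measure_le.
  - apply cover_le_shift. apply (outer_measure_approx _ B); auto.
  - apply (cover_le_subset _ (fun x => (fun y => E (y - t)) (x - - t))).
    { intros x Hx. replace (x - - t - t) with x by ring. exact Hx. }
    apply (cover_le_shift (fun y => E (y - t))).
    apply (outer_measure_approx _ B); auto. apply cover_le_shift; auto.
Qed.

Lemma outer_measure_subadditive E E1 E2 B1 B2 : (forall x, E x -> E1 x \/ E2 x) ->
  cover_le E1 B1 -> cover_le E2 B2 -> outer_measure E <= outer_measure E1 + outer_measure E2.
Proof.
  intros H H1 H2. apply Rle_plus_epsilon. intros eps He. apply outer_measure_le.
  apply (cover_le_subset E (fun x => E1 x \/ E2 x)); auto.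
  replace (outer_measure E1 + outer_measure E2 + eps)
    with ((outer_measure E1 + eps / 2) + (outer_measure E2 + eps / 2)) by field.
  apply cover_le_union; [apply (outer_measure_approx _ B1)|apply (outer_measure_approx _ B2)];
    auto; lra.
Qed.

(** * Measurable sets *)

Definition measurable (E : R -> Prop) : Prop := forall T B, cover_le T B ->
  outer_measure (fun x => T x /\ E x) + outer_measure (fun x => T x /\ ~ E x) <= outer_measure T.

Lemma measurable_split E T B : measurable E -> cover_le T B ->
  outer_measure (fun x => T x /\ E x) + outer_measure (fun x => T x /\ ~ E x) = outer_measure T.
Proof.
  intros HE HT. apply Rle_antisym; [apply (HE T B); auto|].
  apply (outer_measure_subadditive _ _ _ B B).
  - intros x Hx. destruct (classic (E x)); auto.
  - apply (cover_le_subset _ T); tauto.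
  - apply (cover_le_subset _ T); tauto.
Qed.

Lemma lebesgue_measurableE E : lebesgue_measurable E <-> measurable E.
Proof.
  split.
  - intros HE T B HT.
    destruct (HE T (outer_measure T)) as (r1 & r2 & H1 & H2 & H3).
    { apply (outer_measure_is_outer_measure T B HT). }
    rewrite <- (outer_measure_is_unique _ _ H1), <- (outer_measure_is_unique _ _ H2). lra.
  - intros HE T r Hr. pose proof (outer_measure_is_cover_le T r Hr) as HT.
    rewrite (outer_measure_is_unique T r Hr).
    exists (outer_measure (fun x => T x /\ E x)), (outer_measure (fun x => T x /\ ~ E x)).
    split; [|split].
    + apply (outer_measure_is_outer_measure _ (r + 1)). apply (cover_le_subset _ T); tauto.
    + apply (outer_measure_is_outer_measure _ (r + 1)). apply (cover_le_subset _ T); tauto.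
    + apply (measurable_split E T (r + 1)); auto.
Qed.

Lemma measurable_compl E : measurable E -> measurable (fun x => ~ E x).
Proof.
  intros HE T B HT.
  replace (fun x => T x /\ ~ ~ E x) with (fun x => T x /\ E x)
    by (apply pred_ext; intros x; split; [tauto|intros [? ?]; split; [|apply NNPP]; auto]).
  rewrite Rplus_comm. apply (HE T B); auto.
Qed.

Lemma measurable_inter E F : measurable E -> measurable F -> measurable (fun x => E x /\ F x).
Proof.
  intros HE HF T B HT.
  assert (HTE : cover_le (fun x => T x /\ E x) B) by (apply (cover_le_subset _ T); tauto).
  rewrite <- (measurable_split E T B HE HT), <- (measurable_split F _ B HF HTE).
  replace (fun x => T x /\ E x /\ F x) with (fun x => (T x /\ E x) /\ F x)
    by (apply pred_ext; tauto).
  assert (outer_measure (fun x => T x /\ ~ (E x /\ F x)) <=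
          outer_measure (fun x => (T x /\ E x) /\ ~ F x) +
          outer_measure (fun x => T x /\ ~ E x)); [|lra].
  apply (outer_measure_subadditive _ _ _ B B).
  - intros x [Hx Hn]. destruct (classic (E x)); [left|right]; tauto.
  - apply (cover_le_subset _ T); tauto.
  - apply (cover_le_subset _ T); tauto.
Qed.

Lemma measurable_union E F : measurable E -> measurable F -> measurable (fun x => E x \/ F x).
Proof.
  intros HE HF.
  replace (fun x => E x \/ F x) with (fun x => ~ (~ E x /\ ~ F x))
    by (apply pred_ext; intros x; split; [intros H; apply NNPP; tauto|tauto]).
  apply measurable_compl, measurable_inter; apply measurable_compl; auto.
Qed.

Lemma measurable_empty : measurable (fun _ => False).
Proof.
  intros T B HT.
  assert (outer_measure (fun x => T x /\ False) <= 0)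
    by (apply outer_measure_le, cover_le_empty; tauto).
  assert (outer_measure (fun x => T x /\ ~ False) <= outer_measure T)
    by (apply (outer_measure_mono _ _ B); tauto).
  lra.
Qed.

(* Clip every interval of a cover of T at c. *)
Lemma cover_le_split_at T B c : cover_le T B -> exists B1 B2, B1 + B2 <= B /\
  cover_le (fun x => T x /\ x < c) B1 /\ cover_le (fun x => T x /\ ~ x < c) B2.
Proof.
  intros (a & b & [Hab Hc] & Hs).
  set (f1 := fun k => Rmin (b k) c - Rmin (a k) c).
  set (f2 := fun k => Rmax (b k) c - Rmax (a k) c).
  assert (Hf1 : forall k, 0 <= f1 k).
  { intros k; specialize (Hab k); unfold f1, Rmin; repeat destruct Rle_dec; lra. }
  assert (Hf2 : forall k, 0 <= f2 k).
  { intros k; specialize (Hab k); unfold f2, Rmax; repeat destruct Rle_dec; lra. }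
  assert (Hf : forall n, sum_f_R0 (fun k => f1 k + f2 k) n <= B).
  { intros n. rewrite (sum_eq _ (fun k => b k - a k)); auto.
    intros k _; unfold f1, f2, Rmin, Rmax; repeat destruct Rle_dec; lra. }
  assert (Hs1 : forall n, sum_f_R0 f1 n <= B).
  { intros n; specialize (Hf n); rewrite plus_sum in Hf.
    pose proof (cond_pos_sum f2 n Hf2); lra. }
  assert (Hs2 : forall n, sum_f_R0 f2 n <= B).
  { intros n; specialize (Hf n); rewrite plus_sum in Hf.
    pose proof (cond_pos_sum f1 n Hf1); lra. }
  destruct (nonneg_series_bounded_cv f1 B Hf1 Hs1) as (s1 & Hcv1 & _).
  destruct (nonneg_series_bounded_cv f2 B Hf2 Hs2) as (s2 & Hcv2 & _).
  destruct (nonneg_series_bounded_cv (fun k => f1 k + f2 k) B) as (s & Hcv & HsB); auto.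
  { intros k; specialize (Hf1 k); specialize (Hf2 k); lra. }
  exists s1, s2. split; [|split].
  - replace (s1 + s2) with s; auto. apply (UL_sequence (sum_f_R0 (fun k => f1 k + f2 k))); auto.
    apply (Un_cv_ext (fun n => sum_f_R0 f1 n + sum_f_R0 f2 n)).
    + intros n; rewrite plus_sum; reflexivity.
    + apply CV_plus; auto.
  - exists (fun k => Rmin (a k) c), (fun k => Rmin (b k) c). repeat split.
    + intros k; specialize (Hab k); unfold Rmin; repeat destruct Rle_dec; lra.
    + intros x [Hx Hxc]. destruct (Hc x Hx) as [k Hk]. exists k.
      unfold Rmin; repeat destruct Rle_dec; lra.
    + intros n; apply sum_incr; auto.
  - exists (fun k => Rmax (a k) c), (fun k => Rmax (b k) c). repeat split.
    + intros k; specialize (Hab k); unfold Rmax; repeat destruct Rle_dec; lra.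
    + intros x [Hx Hxc]. destruct (Hc x Hx) as [k Hk]. exists k.
      unfold Rmax; repeat destruct Rle_dec; lra.
    + intros n; apply sum_incr; auto.
Qed.

Lemma measurable_lt c : measurable (fun x => x < c).
Proof.
  intros T B HT. apply Rle_plus_epsilon. intros eps He.
  destruct (cover_le_split_at T _ c (outer_measure_approx T B eps HT He))
    as (B1 & B2 & HB & H1 & H2).
  pose proof (outer_measure_le _ _ H1). pose proof (outer_measure_le _ _ H2). lra.
Qed.

Lemma measurable_Ico c d : measurable (fun x => c <= x < d).
Proof.
  replace (fun x => c <= x < d) with (fun x => ~ x < c /\ x < d) by (apply pred_ext; intros x; lra).
  apply measurable_inter; [apply measurable_compl|]; apply measurable_lt.
Qed.

Lemma measurable_finite_union_Ico (J : nat -> Prop) (lo hi : nat -> R) N :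
  measurable (fun x => exists j, (j < N)%nat /\ J j /\ lo j <= x < hi j).
Proof.
  induction N as [|N IH].
  - replace (fun x => exists j, (j < 0)%nat /\ _) with (fun _ : R => False);
      [apply measurable_empty|].
    apply pred_ext; intros x; split; [tauto|]. intros (j & Hj & _); lia.
  - destruct (classic (J N)) as [HJ|HJ].
    + replace (fun x => exists j, (j < S N)%nat /\ J j /\ lo j <= x < hi j) with
        (fun x => (exists j, (j < N)%nat /\ J j /\ lo j <= x < hi j) \/ lo N <= x < hi N).
      { apply measurable_union; auto. apply measurable_Ico. }
      apply pred_ext; intros x; split.
      * intros [(j & Hj & Hj2 & Hj3)|Hx]; [exists j; split; auto|exists N; auto].
      * intros (j & Hj & Hj2 & Hj3). destruct (Nat.eq_dec j N) as [->|Hne]; [auto|].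
        left. exists j. split; auto; lia.
    + replace (fun x => exists j, (j < S N)%nat /\ J j /\ lo j <= x < hi j) with
        (fun x => exists j, (j < N)%nat /\ J j /\ lo j <= x < hi j); auto.
      apply pred_ext; intros x; split; intros (j & Hj & Hj2 & Hj3); exists j; split; auto.
      destruct (Nat.eq_dec j N) as [->|]; [contradiction|lia].
Qed.

Lemma dyadic_family_measurable n E : dyadic_family n E -> measurable E.
Proof.
  intros [J HJ]. replace E with (fun x => exists j, (j < 2 ^ n)%nat /\ J j /\
    INR j / 2 ^ n <= x < (INR j + 1) / 2 ^ n) by (apply pred_ext; intros x; rewrite HJ; tauto).
  apply measurable_finite_union_Ico.
Qed.

(** * Dyadic cells *)

Definition dyadic_cell (n j : nat) (x : R) : Prop := INR j / 2 ^ n <= x < (INR j + 1) / 2 ^ n.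

Lemma pow2_pos n : 0 < 2 ^ n.
Proof. apply pow_lt; lra. Qed.

Lemma INR_pow2 n : INR (2 ^ n) = 2 ^ n.
Proof. rewrite pow_INR. reflexivity. Qed.

Lemma dyadic_cellE n j x : dyadic_cell n j x <-> INR j <= x * 2 ^ n < INR j + 1.
Proof.
  pose proof (pow2_pos n) as Hp. unfold dyadic_cell.
  assert (Hle : forall a, a / 2 ^ n <= x <-> a <= x * 2 ^ n).
  { intros a. split; intros H.
    - replace a with (a / 2 ^ n * 2 ^ n) by (field; lra). apply Rmult_le_compat_r; lra.
    - apply (Rmult_le_reg_r (2 ^ n)); auto. replace (a / 2 ^ n * 2 ^ n) with a by (field; lra).
      exact H. }
  assert (Hlt : forall a, x < a / 2 ^ n <-> x * 2 ^ n < a).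
  { intros a. split; intros H.
    - replace a with (a / 2 ^ n * 2 ^ n) by (field; lra). apply Rmult_lt_compat_r; lra.
    - apply (Rmult_lt_reg_r (2 ^ n)); auto. replace (a / 2 ^ n * 2 ^ n) with a by (field; lra).
      exact H. }
  rewrite Hle, Hlt. tauto.
Qed.

Lemma dyadic_cell_unique n j j' x : dyadic_cell n j x -> dyadic_cell n j' x -> j = j'.
Proof.
  rewrite !dyadic_cellE. intros H1 H2.
  assert (j < S j')%nat by (apply INR_lt; rewrite S_INR; lra).
  assert (j' < S j)%nat by (apply INR_lt; rewrite S_INR; lra). lia.
Qed.

Lemma dyadic_cell_exists n x : 0 <= x < 1 -> exists j, (j < 2 ^ n)%nat /\ dyadic_cell n j x.
Proof.
  intros Hx. pose proof (pow2_pos n) as Hp.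
  destruct (base_Int_part (x * 2 ^ n)) as [H1 H2].
  assert (Hneg : IZR (-1) < IZR (Int_part (x * 2 ^ n))) by nra.
  apply lt_IZR in Hneg.
  exists (Z.to_nat (Int_part (x * 2 ^ n))).
  assert (Hj : INR (Z.to_nat (Int_part (x * 2 ^ n))) = IZR (Int_part (x * 2 ^ n)))
    by (rewrite INR_IZR_INZ, Z2Nat.id; auto; lia).
  split.
  - apply INR_lt. rewrite INR_pow2, Hj. nra.
  - rewrite dyadic_cellE, Hj. lra.
Qed.

Lemma dyadic_cell_nested m n i k x y : (m <= n)%nat ->
  dyadic_cell n i x -> dyadic_cell m k x -> dyadic_cell n i y -> dyadic_cell m k y.
Proof.
  intros Hmn. rewrite !dyadic_cellE.
  replace n with (m + (n - m))%nat by lia. rewrite pow_add.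
  set (D := 2 ^ (n - m)).
  assert (HD : INR (2 ^ (n - m)) = D) by apply INR_pow2.
  assert (HD0 : 0 < D) by apply pow2_pos.
  intros H1 H2 H3.
  assert (Hk1 : (k * 2 ^ (n - m) < i + 1)%nat).
  { apply INR_lt. rewrite mult_INR, plus_INR, HD. simpl (INR 1). nra. }
  assert (Hk2 : (i < (k + 1) * 2 ^ (n - m))%nat).
  { apply INR_lt. rewrite mult_INR, plus_INR, HD. simpl (INR 1). nra. }
  assert (A1 : INR k * D <= INR i) by (rewrite <- HD, <- mult_INR; apply le_INR; lia).
  assert (A2 : INR (i + 1) <= INR ((k + 1) * 2 ^ (n - m))) by (apply le_INR; lia).
  rewrite plus_INR, mult_INR, plus_INR, HD in A2. simpl (INR 1) in A2.
  rewrite <- Rmult_assoc in H3. nra.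
Qed.

Lemma dyadic_cell_half n i p x : (p <= 1)%nat ->
  dyadic_cell (S n) (2 * i + p) x -> dyadic_cell n i x.
Proof.
  intros Hp. rewrite !dyadic_cellE, plus_INR, mult_INR. simpl pow.
  assert (INR p <= 1) by (apply (le_INR p 1) in Hp; simpl in Hp; lra).
  pose proof (pos_INR p). simpl (INR 2). lra.
Qed.

Lemma dyadic_cell_succ n j x : dyadic_cell n (S j) x <-> dyadic_cell n j (x - / 2 ^ n).
Proof.
  pose proof (pow2_pos n). rewrite !dyadic_cellE, S_INR.
  replace ((x - / 2 ^ n) * 2 ^ n) with (x * 2 ^ n - 1) by (field; lra). lra.
Qed.

Lemma dyadic_family_bounds m A x : dyadic_family m A -> A x -> 0 <= x < 1.
Proof.
  intros [J HJ] Hx. apply HJ in Hx. destruct Hx as (j & Hj & _ & Hx).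
  apply dyadic_cellE in Hx. pose proof (pos_INR j).
  assert (Hjm : INR (S j) <= INR (2 ^ m)) by (apply le_INR; lia).
  rewrite S_INR, INR_pow2 in Hjm. pose proof (pow2_pos m). split; nra.
Qed.

Lemma dyadic_family_cell_closed m A n i x y : dyadic_family m A -> (m <= n)%nat ->
  dyadic_cell n i x -> dyadic_cell n i y -> A x -> A y.
Proof.
  intros [J HJ] Hmn Hx Hy Ax. apply HJ in Ax. destruct Ax as (k & Hk & HJk & Hkx).
  apply HJ. exists k. repeat split; auto; apply (dyadic_cell_nested m n i k x y); auto.
Qed.

(** * Even and odd halves of a dyadic set *)

Definition alt_cells (n p : nat) (x : R) : Prop := exists i, dyadic_cell n (2 * i + p) x.

Definition parity_part (n : nat) (A : R -> Prop) (p : nat) (x : R) : Prop :=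
  A x /\ alt_cells n p x.

Lemma parity_part_dyadic m A n p : dyadic_family m A -> (m <= n)%nat ->
  dyadic_family n (parity_part n A p).
Proof.
  intros HA Hmn.
  exists (fun j => (exists i, j = (2 * i + p)%nat) /\ exists y, A y /\ dyadic_cell n j y).
  intros x. split.
  - intros [Ax [i Hi]].
    destruct (dyadic_cell_exists n x) as (j & Hj & Hj');
      [apply (dyadic_family_bounds m A); auto|].
    pose proof (dyadic_cell_unique _ _ _ _ Hj' Hi) as ->.
    exists (2 * i + p)%nat. split; [exact Hj|]. split; [split; eauto|exact Hi].
  - intros (j & _ & [[i ->] (y & Ay & Hy)] & Hx). split; [|exists i; exact Hx].
    apply (dyadic_family_cell_closed m A n (2 * i + p) y x); auto.
Qed.

Lemma parity_part_cover m A n x : dyadic_family m A -> A x ->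
  parity_part n A 0 x \/ parity_part n A 1 x.
Proof.
  intros HA Ax.
  destruct (dyadic_cell_exists n x) as (j & _ & Hj); [apply (dyadic_family_bounds m A); auto|].
  destruct (Nat.Even_or_Odd j) as [[i ->]|[i ->]].
  - left. split; auto. exists i. rewrite Nat.add_0_r; auto.
  - right. split; auto. exists i. auto.
Qed.

Lemma parity_part_disjoint n A x : ~ (parity_part n A 0 x /\ parity_part n A 1 x).
Proof.
  intros [[_ [i Hi]] [_ [i' Hi']]]. pose proof (dyadic_cell_unique _ _ _ _ Hi Hi'). lia.
Qed.

Lemma parity_part_shift m A n x : dyadic_family m A -> (m < n)%nat ->
  (parity_part n A 1 x <-> parity_part n A 0 (x - / 2 ^ n)).
Proof.
  intros HA Hmn. destruct n as [|n]; [lia|].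
  assert (Hcell : forall i, dyadic_cell (S n) (2 * i + 1) x <->
                            dyadic_cell (S n) (2 * i + 0) (x - / 2 ^ S n)).
  { intros i. rewrite <- dyadic_cell_succ. replace (2 * i + 1)%nat with (S (2 * i + 0)) by lia.
    reflexivity. }
  assert (Hsame : forall i, dyadic_cell (S n) (2 * i + 1) x ->
                            (A x <-> A (x - / 2 ^ S n))).
  { intros i Hx. pose proof (proj1 (Hcell i) Hx) as Hx'.
    apply dyadic_cell_half in Hx; [|lia]. apply dyadic_cell_half in Hx'; [|lia].
    split; apply (dyadic_family_cell_closed m A n i); auto; lia. }
  split.
  - intros [Ax [i Hi]]. split; [apply (Hsame i); auto|exists i; apply Hcell; auto].
  - intros [Ax [i Hi]]. apply Hcell in Hi. split; [apply (Hsame i); auto|exists i; auto].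
Qed.

Lemma alt_cells_index n p a b x : a <= x <= b -> alt_cells n p x ->
  let y t := (t * 2 ^ n - INR p) / 2 in
  exists i, (Int_part (y a) <= Z.of_nat i <= Int_part (y b))%Z /\ dyadic_cell n (2 * i + p) x.
Proof.
  intros Hx [i Hi] y. exists i. split; auto.
  pose proof (pow2_pos n) as Hp. pose proof Hi as Hs. apply dyadic_cellE in Hs.
  rewrite plus_INR, mult_INR in Hs. simpl (INR 2) in Hs. rewrite INR_IZR_INZ in Hs.
  destruct (base_Int_part (y a)) as [Ha1 Ha2]. destruct (base_Int_part (y b)) as [Hb1 Hb2].
  assert (y a <= y x <= y b) by (unfold y; split; nra).
  assert (Hyx : IZR (Z.of_nat i) <= y x < IZR (Z.of_nat i) + 1) by (unfold y in *; lra).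
  split; apply Z.lt_succ_r, lt_IZR; rewrite succ_IZR; lra.
Qed.

(* Within [a, b] the cells 2i+p are counted from Int_part ((a 2^n - p)/2) up to
   Int_part ((b 2^n - p)/2); each has length 1/2^n. *)
Lemma cover_le_alt_cells_interval n p a b : a <= b ->
  cover_le (fun x => a <= x <= b /\ alt_cells n p x) ((b - a) / 2 + 2 / 2 ^ n).
Proof.
  intros Hab. pose proof (pow2_pos n) as Hp.
  set (y t := (t * 2 ^ n - INR p) / 2).
  set (z0 := Int_part (y a)). set (z1 := Int_part (y b)).
  set (K := Z.to_nat (z1 - z0)).
  set (lo k := (2 * (IZR z0 + INR k) + INR p) / 2 ^ n).
  apply (cover_le_subset _ (fun x => exists k, (k <= K)%nat /\ lo k <= x <= lo k + / 2 ^ n)).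
  - intros x [Hx Halt]. destruct (alt_cells_index n p a b x Hx Halt) as (i & Hi & Hcell).
    change (z0 <= Z.of_nat i <= z1)%Z in Hi.
    exists (Z.to_nat (Z.of_nat i - z0)). split; [apply Z2Nat.inj_le; lia|].
    unfold lo. rewrite INR_IZR_INZ, Z2Nat.id, minus_IZR by lia.
    replace (IZR z0 + (IZR (Z.of_nat i) - IZR z0)) with (INR i) by (rewrite INR_IZR_INZ; ring).
    unfold dyadic_cell in Hcell. rewrite plus_INR, mult_INR in Hcell. simpl (INR 2) in Hcell.
    split; [lra|]. replace ((2 * INR i + INR p) / 2 ^ n + / 2 ^ n)
      with ((2 * INR i + INR p + 1) / 2 ^ n) by (field; lra). lra.
  - eapply cover_le_weaken.
    { apply (cover_le_finite_union _ (fun _ => / 2 ^ n)). intros k.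
      pose proof (Rinv_0_lt_compat _ Hp).
      apply (cover_le_weaken _ (lo k + / 2 ^ n - lo k)); [apply cover_le_interval|]; lra. }
    rewrite sum_cte, S_INR.
    destruct (base_Int_part (y a)) as [Ha1 Ha2]. destruct (base_Int_part (y b)) as [Hb1 Hb2].
    fold z0 z1 in Ha1, Ha2, Hb1, Hb2.
    assert (Hy : y a <= y b) by (unfold y; nra).
    assert (Hz : (z0 <= z1)%Z) by (apply Z.lt_succ_r, lt_IZR; rewrite succ_IZR; lra).
    assert (HK : INR K = IZR z1 - IZR z0)
      by (unfold K; rewrite INR_IZR_INZ, Z2Nat.id, minus_IZR; [reflexivity|lia]).
    assert (Hcount : INR K + 1 <= (b - a) * 2 ^ n / 2 + 2) by (rewrite HK; unfold y in *; lra).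
    replace ((b - a) / 2 + 2 / 2 ^ n) with (/ 2 ^ n * ((b - a) * 2 ^ n / 2 + 2)) by (field; lra).
    apply Rmult_le_compat_l; [left; apply Rinv_0_lt_compat|]; auto.
Qed.

Lemma inv_pow2_eventually_le eps : 0 < eps -> exists N, forall n, (N <= n)%nat -> / 2 ^ n <= eps.
Proof.
  intros He. assert (Hhalf : Rabs (/ 2) < 1) by (rewrite Rabs_pos_eq; lra).
  destruct (pow_lt_1_zero (/ 2) Hhalf eps He) as [N HN].
  exists N. intros n Hn. specialize (HN n Hn).
  rewrite pow_inv, Rabs_pos_eq in HN; [lra|]. left; apply Rinv_0_lt_compat, pow2_pos.
Qed.

(* Cover E by intervals up to [delta/3], keep the first K + 1 of them; on each of these the
   alternating cells take up half the length up to O(2^-n), and the tail has length at most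
   [delta/3]. *)
Lemma outer_measure_alt_cells_le E B p delta : cover_le E B -> 0 < delta ->
  exists N, forall n, (N <= n)%nat ->
    outer_measure (fun x => E x /\ alt_cells n p x) <= outer_measure E / 2 + delta.
Proof.
  intros HE Hd.
  destruct (outer_measure_approx E B (delta / 3) HE ltac:(lra)) as (a & b & [Hab Hc] & Hs).
  set (len k := b k - a k).
  assert (Hlen : forall k, 0 <= len k) by (intros k; specialize (Hab k); unfold len; lra).
  destruct (nonneg_series_bounded_cv len _ Hlen Hs) as (s & Hcv & Hsle).
  destruct (Hcv (delta / 3)) as [K HK]; [lra|]. specialize (HK K (le_n _)).
  unfold Rdist in HK. apply Rabs_def2 in HK.
  assert (HSK : 0 < INR (S K)) by (apply lt_0_INR; lia).
  destruct (inv_pow2_eventually_le (delta / (4 * INR (S K)))) as [N HN].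
  { apply Rdiv_lt_0_compat; lra. }
  exists N. intros n Hn. specialize (HN n Hn).
  set (U := fun x => exists k, (k <= K)%nat /\ (a k <= x <= b k /\ alt_cells n p x)).
  set (Tail := fun x => exists k, (K < k)%nat /\ a k <= x <= b k).
  assert (HU : cover_le U (sum_f_R0 len K / 2 + INR (S K) * (2 / 2 ^ n))).
  { eapply cover_le_weaken.
    { apply (cover_le_finite_union (fun k x => a k <= x <= b k /\ alt_cells n p x)).
      intros k. apply cover_le_alt_cells_interval; auto. }
    rewrite plus_sum, sum_cte, (Rmult_comm (INR (S K))).
    right. f_equal. unfold Rdiv. rewrite Rmult_comm, scal_sum. reflexivity. }
  assert (HT : cover_le Tail (s - sum_f_R0 len K)) by (apply cover_le_tail; auto).
  assert (outer_measure (fun x => E x /\ alt_cells n p x) <=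
          outer_measure U + outer_measure Tail).
  { refine (outer_measure_subadditive _ _ _ _ _ _ HU HT). intros x [Hx Hp].
    destruct (Hc x Hx) as [k Hk].
    destruct (le_lt_dec k K); [left; exists k; auto|right; exists k; auto]. }
  pose proof (outer_measure_le _ _ HU). pose proof (outer_measure_le _ _ HT).
  assert (INR (S K) * (2 / 2 ^ n) <= delta / 2).
  { unfold Rdiv at 1. rewrite (Rmult_comm 2), <- Rmult_assoc.
    apply Rle_trans with (INR (S K) * (delta / (4 * INR (S K))) * 2).
    - apply Rmult_le_compat_r; [lra|]. apply Rmult_le_compat_l; lra.
    - right. field. lra. }
  lra.
Qed.

Lemma dyadic_family_cover_le k X : dyadic_family k X -> cover_le X 1.
Proof.
  intros HX. apply (cover_le_subset _ (fun x => 0 <= x <= 1)).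
  - intros x Hx. apply (dyadic_family_bounds k X) in Hx; auto. lra.
  - apply (cover_le_weaken _ (1 - 0)); [apply cover_le_interval|]; lra.
Qed.

Lemma dyadic_family_measure k X : dyadic_family k X -> measure_is X (outer_measure X).
Proof.
  intros HX. split.
  - apply lebesgue_measurableE, (dyadic_family_measurable k); auto.
  - apply (outer_measure_is_outer_measure _ 1), (dyadic_family_cover_le k); auto.
Qed.

Lemma parity_part_measure m A n : dyadic_family m A -> (m < n)%nat ->
  exists mA mA0 mA1, measure_is A mA /\ measure_is (parity_part n A 0) mA0 /\
    measure_is (parity_part n A 1) mA1 /\ mA0 = mA / 2 /\ mA1 = mA / 2.
Proof.
  intros HA Hmn.
  assert (HD : forall p, dyadic_family n (parity_part n A p))
    by (intros p; apply (parity_part_dyadic m); auto; lia).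
  pose proof (measurable_split _ A 1 (dyadic_family_measurable n _ (HD 0%nat))
                (dyadic_family_cover_le m A HA)) as Hsplit.
  replace (fun x => A x /\ parity_part n A 0 x) with (parity_part n A 0) in Hsplit
    by (apply pred_ext; intros x; unfold parity_part; tauto).
  replace (fun x => A x /\ ~ parity_part n A 0 x) with (parity_part n A 1) in Hsplit.
  2:{ apply pred_ext; intros x; split.
      - intros H1. split; [apply H1|]. intros H0. apply (parity_part_disjoint n A x); auto.
      - intros [Ax H0]. destruct (parity_part_cover m A n x HA Ax); tauto. }
  assert (Hshift : outer_measure (parity_part n A 1) = outer_measure (parity_part n A 0)).
  { replace (parity_part n A 1) with (fun x => parity_part n A 0 (x - / 2 ^ n))
      by (apply pred_ext; intros x; rewrite (parity_part_shift m); auto; tauto).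
    apply (outer_measure_shift _ 1), (dyadic_family_cover_le n); auto. }
  exists (outer_measure A), (outer_measure (parity_part n A 0)),
         (outer_measure (parity_part n A 1)).
  split; [apply (dyadic_family_measure m); auto|].
  split; [apply (dyadic_family_measure n); auto|].
  split; [apply (dyadic_family_measure n); auto|lra].
Qed.

(** * Rademacher functions *)

Lemma sgn_pos s : 0 < s -> sgn s = 1.
Proof. intros H. unfold sgn. destruct Rlt_dec; [auto|lra]. Qed.

Lemma sgn_neg s : s < 0 -> sgn s = -1.
Proof. intros H. unfold sgn. destruct Rlt_dec; [lra|]. destruct Rlt_dec; [auto|lra]. Qed.

Lemma sin_plus_INR_PI u j : sin (u + INR j * PI) = (-1) ^ j * sin u.
Proof.
  induction j as [|j IH].
  - simpl. rewrite Rmult_0_l, Rplus_0_r. ring.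
  - rewrite S_INR, Rmult_plus_distr_r, Rmult_1_l, <- Rplus_assoc, neg_sin, IH. simpl. ring.
Qed.

Lemma rademacher_dyadic_cell n j x : dyadic_cell n j x -> INR j < x * 2 ^ n ->
  rademacher n x = (-1) ^ j.
Proof.
  intros Hx Hlt. apply dyadic_cellE in Hx. pose proof PI_RGT_0.
  unfold rademacher.
  replace (2 ^ n * PI * x) with (PI * (x * 2 ^ n - INR j) + INR j * PI) by ring.
  rewrite sin_plus_INR_PI.
  assert (Hsin : 0 < sin (PI * (x * 2 ^ n - INR j))) by (apply sin_gt_0; nra).
  destruct (Nat.Even_or_Odd j) as [[i ->]|[i ->]].
  - rewrite pow_1_even, Rmult_1_l. apply sgn_pos; auto.
  - replace ((-1) ^ (2 * i + 1)) with (-1) by (rewrite Nat.add_1_r, pow_1_odd; reflexivity).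
    apply sgn_neg. lra.
Qed.

Lemma dyadic_points_null E n : (forall x, E x -> exists j, x * 2 ^ n = INR j) ->
  outer_measure_is E 0.
Proof.
  intros H. apply outer_measure_isE. split.
  - intros B HB. apply (cover_le_nonneg E); auto.
  - intros eps He. exists (fun k => INR k / 2 ^ n), (fun k => INR k / 2 ^ n).
    split; [split|].
    + intros k; lra.
    + intros x Hx. destruct (H x Hx) as [j Hj]. exists j.
      assert (x = INR j / 2 ^ n) by (rewrite <- Hj; field; apply Rgt_not_eq, pow2_pos). lra.
    + intros m. rewrite (sum_eq _ (fun _ => 0)), sum_cte; [lra|]. intros; ring.
Qed.

Lemma parity_part_rademacher n A p x : parity_part n A p x -> rademacher n x <> (-1) ^ p ->
  exists j, x * 2 ^ n = INR j.
Proof.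
  intros [_ [i Hi]] Hr. exists (2 * i + p)%nat.
  pose proof Hi as Hs. apply dyadic_cellE in Hs.
  destruct (Rle_lt_or_eq_dec _ _ (proj1 Hs)) as [Hlt|Heq]; [|auto].
  exfalso. apply Hr. rewrite (rademacher_dyadic_cell n _ x Hi Hlt), pow_add, pow_1_even. ring.
Qed.

(** * Integrals of nonnegative functions *)

Definition simple_fun := list (R * (R -> bool) * R).

Definition simple_term_on (A : R -> Prop) (q : R * (R -> bool) * R) : Prop :=
  0 <= fst (fst q) /\ measure_is (fun x => snd (fst q) x = true) (snd q) /\
  (forall x, snd (fst q) x = true -> A x).

Lemma simple_eval_app (l1 l2 : simple_fun) x :
  simple_eval (l1 ++ l2) x = simple_eval l1 x + simple_eval l2 x.
Proof. induction l1 as [|q l1 IH]; simpl; [lra|]. unfold simple_eval in *. simpl. rewrite IH. lra. Qed.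

Lemma simple_integral_app (l1 l2 : simple_fun) :
  simple_integral (l1 ++ l2) = simple_integral l1 + simple_integral l2.
Proof. induction l1 as [|q l1 IH]; simpl; [lra|]. unfold simple_integral in *. simpl. rewrite IH. lra. Qed.

Lemma simple_eval_outside A (l : simple_fun) x : Forall (simple_term_on A) l -> ~ A x ->
  simple_eval l x = 0.
Proof.
  induction 1 as [|q l [_ [_ Hq]] _ IH]; intros Hx; simpl; auto.
  unfold simple_eval in *. simpl. rewrite IH; auto.
  destruct (snd (fst q) x) eqn:Eq; [exfalso; apply Hx, Hq; auto|lra].
Qed.

Lemma simple_term_on_mono A A' q : (forall x, A x -> A' x) -> simple_term_on A q ->
  simple_term_on A' q.
Proof. intros H (H1 & H2 & H3). split; [|split]; auto. Qed.

Lemma simple_below_nil g A : (forall x, A x -> 0 <= g x) -> simple_below g A 0.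
Proof. intros Hg. exists nil. repeat split; auto. Qed.

Lemma simple_below_mono g A A' v : (forall x, A x -> A' x) ->
  (forall x, A' x -> ~ A x -> 0 <= g x) -> simple_below g A v -> simple_below g A' v.
Proof.
  intros HAA Hg (l & Hl & Hle & Hv). exists l. split; [|split]; auto.
  - eapply Forall_impl; [|exact Hl]. intros q; apply simple_term_on_mono; auto.
  - intros x Hx. destruct (classic (A x)); auto. rewrite (simple_eval_outside A); auto.
Qed.

Lemma simple_below_union g A A0 A1 v0 v1 : (forall x, A0 x -> A x) -> (forall x, A1 x -> A x) ->
  (forall x, ~ (A0 x /\ A1 x)) -> (forall x, A x -> A0 x \/ A1 x) ->
  simple_below g A0 v0 -> simple_below g A1 v1 -> simple_below g A (v0 + v1).
Proof.
  intros H0 H1 Hd Hc (l0 & Hl0 & Hle0 & Hv0) (l1 & Hl1 & Hle1 & Hv1).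
  exists (l0 ++ l1). split; [|split].
  - apply Forall_app.
    split; (eapply Forall_impl; [|eassumption]); intros q; apply simple_term_on_mono; auto.
  - intros x Hx. rewrite simple_eval_app. destruct (Hc x Hx) as [HA0|HA1].
    + assert (~ A1 x) by (intros HA1; apply (Hd x); auto).
      rewrite (simple_eval_outside A1 l1); auto. specialize (Hle0 x HA0). lra.
    + assert (~ A0 x) by (intros HA0; apply (Hd x); auto).
      rewrite (simple_eval_outside A0 l0); auto. specialize (Hle1 x HA1). lra.
  - rewrite simple_integral_app. subst. auto.
Qed.

Lemma integral_exists g A : nonneg_L1_01 g -> (forall x, A x -> unit_interval x) ->
  exists I, integral_is g A I /\ 0 <= I.
Proof.
  intros (_ & Hg & v & [Hvub _]) HA.
  destruct (completeness (simple_below g A)) as [I HI].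
  - exists v. intros w Hw. apply Hvub. apply (simple_below_mono g A); auto.
  - exists 0. apply simple_below_nil. auto.
  - exists I. split; auto. apply (proj1 HI). apply simple_below_nil; auto.
Qed.

Lemma integral_superadditive g A A0 A1 I I0 I1 :
  (forall x, A0 x -> A x) -> (forall x, A1 x -> A x) ->
  (forall x, ~ (A0 x /\ A1 x)) -> (forall x, A x -> A0 x \/ A1 x) ->
  integral_is g A I -> integral_is g A0 I0 -> integral_is g A1 I1 -> I0 + I1 <= I.
Proof.
  intros H0 H1 Hd Hc [HIu _] [_ HI0l] [_ HI1l].
  assert (I1 <= I - I0); [|lra].
  apply HI1l. intros w1 Hw1. assert (I0 <= I - w1); [|lra].
  apply HI0l. intros w0 Hw0. assert (w0 + w1 <= I); [|lra].
  apply HIu. apply (simple_below_union g A A0 A1); auto.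
Qed.

Lemma integral_approx g A I v : integral_is g A I -> v < I ->
  exists w, simple_below g A w /\ v < w.
Proof.
  intros [_ HIl] Hv. apply NNPP. intros Hn. assert (I <= v); [|lra].
  apply HIl. intros w Hw. apply Rnot_lt_le. intros Hlt. apply Hn. eauto.
Qed.

Definition bool_of (P : Prop) : bool := if excluded_middle_informative P then true else false.

Lemma bool_ofE P : bool_of P = true <-> P.
Proof. unfold bool_of. destruct excluded_middle_informative; split; congruence || tauto. Qed.

Definition term_set (q : R * (R -> bool) * R) (x : R) : Prop := snd (fst q) x = true.

Definition restrict_term (B : R -> Prop) (q : R * (R -> bool) * R) : R * (R -> bool) * R :=
  ((fst (fst q), fun x => andb (snd (fst q) x) (bool_of (B x))),
   outer_measure (fun x => term_set q x /\ B x)).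

Lemma restrict_term_set B q : term_set (restrict_term B q) = fun x => term_set q x /\ B x.
Proof.
  apply pred_ext; intros x. unfold term_set; simpl.
  rewrite Bool.andb_true_iff, bool_ofE. tauto.
Qed.

Lemma restrict_term_on A B q : measurable B -> (forall x, B x -> A x) ->
  simple_term_on A q -> simple_term_on B (restrict_term B q).
Proof.
  intros HB HBA (Hc & [Hm Ho] & _).
  split; [exact Hc|split; [split|]].
  - change (lebesgue_measurable (term_set (restrict_term B q))). rewrite restrict_term_set. apply lebesgue_measurableE, measurable_inter; auto.
    apply lebesgue_measurableE; auto.
  - change (outer_measure_is (term_set (restrict_term B q)) (snd (restrict_term B q))).
    rewrite restrict_term_set. apply (outer_measure_is_outer_measure _ (snd q + 1)).
    apply (cover_le_subset _ (term_set q)); [tauto|].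
    apply (outer_measure_is_cover_le _ _ Ho).
  - intros x Hx. change (term_set (restrict_term B q) x) in Hx.
    rewrite restrict_term_set in Hx. tauto.
Qed.

Lemma restrict_eval_le B (l : simple_fun) x : Forall (fun q => 0 <= fst (fst q)) l ->
  simple_eval (map (restrict_term B) l) x <= simple_eval l x.
Proof.
  induction 1 as [|q l Hq _ IH]; simpl; [lra|]. unfold simple_eval in *. simpl.
  destruct (snd (fst q) x); simpl; [destruct (bool_of (B x))|]; lra.
Qed.

Definition coef_sum (l : simple_fun) : R :=
  fold_right (fun (q : R * (R -> bool) * R) acc => fst (fst q) + acc) 0 l.

Lemma coef_sum_nonneg (l : simple_fun) : Forall (fun q => 0 <= fst (fst q)) l -> 0 <= coef_sum l.
Proof. induction 1; simpl; lra. Qed.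

Lemma restrict_integral_ge B (l : simple_fun) d :
  Forall (fun q => 0 <= fst (fst q) /\
                   snd q / 2 - d <= outer_measure (fun x => term_set q x /\ B x)) l ->
  simple_integral l / 2 - d * coef_sum l <= simple_integral (map (restrict_term B) l).
Proof.
  induction 1 as [|q l [Hc Hq] _ IH]; simpl; [lra|]. unfold simple_integral in *. simpl.
  assert (fst (fst q) * (snd q / 2 - d) <=
          fst (fst q) * outer_measure (fun x => term_set q x /\ B x))
    by (apply Rmult_le_compat_l; auto).
  lra.
Qed.

Lemma eventually_Forall {X : Type} (P : X -> nat -> Prop) (l : list X) :
  Forall (fun q => exists N, forall n, (N <= n)%nat -> P q n) l ->
  exists N, forall n, (N <= n)%nat -> Forall (fun q => P q n) l.
Proof.
  induction 1 as [|q l [N1 H1] _ [N2 H2]].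
  - exists O. intros; constructor.
  - exists (max N1 N2). intros n Hn. constructor; [apply H1|apply H2]; lia.
Qed.

(** * The halves share the integral *)

(* Inside E, the complement of the p-th half lies in the alternating cells of the
   other parity, which asymptotically take up half of E. *)
Lemma outer_measure_parity_part_ge m A E B d : dyadic_family m A ->
  (forall x, E x -> A x) -> cover_le E B -> 0 < d ->
  exists N, forall n, (N <= n)%nat -> (m < n)%nat -> forall p, (p <= 1)%nat ->
    outer_measure E / 2 - d <= outer_measure (fun x => E x /\ parity_part n A p x).
Proof.
  intros HA HEA HE Hd.
  destruct (outer_measure_alt_cells_le E B 0 d HE Hd) as [N0 HN0].
  destruct (outer_measure_alt_cells_le E B 1 d HE Hd) as [N1 HN1].
  exists (max N0 N1). intros n Hn Hmn p Hp.
  assert (HP : measurable (parity_part n A p))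
    by (apply (dyadic_family_measurable n), (parity_part_dyadic m); auto; lia).
  pose proof (measurable_split _ E B HP HE) as Hsplit.
  assert (Hother : forall x, E x -> ~ parity_part n A p x -> alt_cells n (1 - p) x).
  { intros x Ex Hx. pose proof (HEA x Ex) as Ax. unfold parity_part in Hx.
    destruct (parity_part_cover m A n x HA Ax) as [[_ H]|[_ H]];
      destruct p as [|[|p]]; simpl; tauto || lia. }
  assert (outer_measure (fun x => E x /\ ~ parity_part n A p x) <=
          outer_measure (fun x => E x /\ alt_cells n (1 - p) x)).
  { apply (outer_measure_mono _ _ B); [firstorder|].
    apply (cover_le_subset _ E); tauto. }
  assert (outer_measure (fun x => E x /\ alt_cells n (1 - p) x) <= outer_measure E / 2 + d)
    by (destruct p as [|[|p]]; [apply HN1|apply HN0|]; lia).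
  lra.
Qed.

Lemma restrict_parity_part_integral_ge m A (l : simple_fun) d : dyadic_family m A ->
  Forall (simple_term_on A) l -> 0 < d ->
  exists N, forall n, (N <= n)%nat -> (m < n)%nat -> forall p, (p <= 1)%nat ->
    simple_integral l / 2 - d * coef_sum l <=
    simple_integral (map (restrict_term (parity_part n A p)) l).
Proof.
  intros HA Hl Hd.
  destruct (eventually_Forall (fun q n => (m < n)%nat -> forall p, (p <= 1)%nat ->
       snd q / 2 - d <= outer_measure (fun x => term_set q x /\ parity_part n A p x)) l)
    as [N HN].
  { eapply Forall_impl; [|exact Hl]. intros q (_ & [_ Ho] & HqA).
    rewrite (outer_measure_is_unique _ _ Ho).
    apply (outer_measure_parity_part_ge m A _ (snd q + 1)); auto.
    apply (outer_measure_is_cover_le _ _ Ho). }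
  exists N. intros n Hn Hmn p Hp. apply restrict_integral_ge.
  specialize (HN n Hn). rewrite Forall_forall in HN, Hl |- *. intros q Hq.
  split; [apply (Hl q Hq)|apply (HN q Hq); auto].
Qed.

Lemma integral_parity_part_ge g m A lam IA : dyadic_family m A ->
  (forall x, A x -> 0 <= g x) -> 0 < lam < 1 -> integral_is g A IA ->
  exists N, forall n, (N <= n)%nat -> (m < n)%nat -> forall p, (p <= 1)%nat ->
    forall I, integral_is g (parity_part n A p) I -> lam / 2 * IA <= I.
Proof.
  intros HA Hg Hlam HIA.
  assert (HI0 : 0 <= IA) by (apply (proj1 HIA), simple_below_nil; auto).
  destruct (Req_dec IA 0) as [Hz|Hnz].
  { exists O. intros n _ _ p _ I [HI _]. rewrite Hz, Rmult_0_r.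
    apply HI, simple_below_nil. intros x [Ax _]; auto. }
  destruct (integral_approx g A IA ((1 + lam) / 2 * IA) HIA) as (w & (l & Hl & Hle & Hw) & Hwlt);
    [nra|].
  assert (Hcoef : Forall (fun q => 0 <= fst (fst q)) l)
    by (eapply Forall_impl; [|exact Hl]; intros q Hq; apply Hq).
  pose proof (coef_sum_nonneg l Hcoef) as Hc0.
  set (d := (1 - lam) / 4 * IA / (coef_sum l + 1)).
  assert (Hd : 0 < d) by (unfold d; apply Rdiv_lt_0_compat; nra).
  destruct (restrict_parity_part_integral_ge m A l d HA Hl Hd) as [N HN].
  exists N. intros n Hn Hmn p Hp I [HI _].
  assert (HP : measurable (parity_part n A p))
    by (apply (dyadic_family_measurable n), (parity_part_dyadic m); auto; lia).
  assert (simple_integral (map (restrict_term (parity_part n A p)) l) <= I).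
  { apply HI. exists (map (restrict_term (parity_part n A p)) l). split; [|split; auto].
    - apply Forall_map. eapply Forall_impl; [|exact Hl].
      intros q. apply (restrict_term_on A); auto. intros x [Ax _]; auto.
    - intros x [Ax _]. eapply Rle_trans; [apply restrict_eval_le; auto|auto]. }
  assert (d * coef_sum l <= (1 - lam) / 4 * IA).
  { apply Rle_trans with (d * (coef_sum l + 1)); [apply Rmult_le_compat_l; lra|].
    right. unfold d. field. lra. }
  specialize (HN n Hn Hmn p Hp). lra.
Qed.

Lemma parity_part_integral_bounds g m A lam IA I0 I1 n : dyadic_family m A ->
  (forall x, A x -> 0 <= g x) -> 0 < lam < 1 ->
  integral_is g A IA -> integral_is g (parity_part n A 0) I0 ->
  integral_is g (parity_part n A 1) I1 ->
  lam / 2 * IA <= I0 -> lam / 2 * IA <= I1 ->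
  I0 <= 1 / (2 * lam) * IA /\ I1 <= 1 / (2 * lam) * IA.
Proof.
  intros HA Hg Hlam HIA HI0 HI1 L0 L1.
  assert (HIA0 : 0 <= IA) by (apply (proj1 HIA), simple_below_nil; auto).
  assert (Hsum : I0 + I1 <= IA).
  { apply (integral_superadditive g A (parity_part n A 0) (parity_part n A 1)); auto.
    - intros x [Ax _]; auto.
    - intros x [Ax _]; auto.
    - apply parity_part_disjoint.
    - intros x Ax. apply (parity_part_cover m); auto. }
  assert (Hlam2 : (1 - lam / 2) * IA <= 1 / (2 * lam) * IA).
  { apply Rmult_le_compat_r; auto.
    replace (1 / (2 * lam)) with ((1 - lam / 2) + (1 - lam) ^ 2 / (2 * lam)) by (field; lra).
    assert (0 <= (1 - lam) ^ 2 / (2 * lam))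
      by (apply Rmult_le_pos; [nra|left; apply Rinv_0_lt_compat; lra]).
    lra. }
  lra.
Qed.

Lemma parity_part_integral g m A lam : nonneg_L1_01 g -> dyadic_family m A -> 0 < lam < 1 ->
  exists N, forall n, (N <= n)%nat -> (m < n)%nat ->
    exists IA IA0 IA1, integral_is g A IA /\ integral_is g (parity_part n A 0) IA0 /\
      integral_is g (parity_part n A 1) IA1 /\
      lam / 2 * IA <= IA0 <= 1 / (2 * lam) * IA /\ lam / 2 * IA <= IA1 <= 1 / (2 * lam) * IA.
Proof.
  intros Hg HA Hlam.
  assert (HA01 : forall x, A x -> unit_interval x)
    by (intros x Ax; apply (dyadic_family_bounds m) in Ax; auto; unfold unit_interval; lra).
  assert (HgA : forall x, A x -> 0 <= g x) by (intros x Ax; apply Hg; auto).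
  destruct (integral_exists g A Hg HA01) as (IA & HIA & _).
  destruct (integral_parity_part_ge g m A lam IA HA HgA Hlam HIA) as [N HN].
  exists N. intros n Hn Hmn.
  destruct (integral_exists g (parity_part n A 0) Hg) as (I0 & HI0 & _);
    [intros x [Ax _]; auto|].
  destruct (integral_exists g (parity_part n A 1) Hg) as (I1 & HI1 & _);
    [intros x [Ax _]; auto|].
  pose proof (HN n Hn Hmn 0%nat ltac:(lia) I0 HI0) as L0.
  pose proof (HN n Hn Hmn 1%nat ltac:(lia) I1 HI1) as L1.
  destruct (parity_part_integral_bounds g m A lam IA I0 I1 n) as [U0 U1]; auto.
  exists IA, I0, I1. repeat (split; auto).
Qed.

Theorem lemma3p1 (g : R -> R) (m : nat) (A : R -> Prop) (lam : R) :
  nonneg_L1_01 g ->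
  dyadic_family m A ->
  0 < lam < 1 ->
  exists n_lam : nat, (m < n_lam)%nat /\
    forall n : nat, (n_lam <= n)%nat ->
      exists A0 A1 : R -> Prop,
        dyadic_family n A0 /\ dyadic_family n A1 /\
        (forall x, A x <-> (A0 x \/ A1 x)) /\
        (forall x, ~ (A0 x /\ A1 x)) /\
        (* (1) *)
        (exists mA mA0 mA1, measure_is A mA /\ measure_is A0 mA0 /\
           measure_is A1 mA1 /\ mA0 = mA / 2 /\ mA1 = mA / 2) /\
        (* (2) *)
        (exists IA IA0 IA1, integral_is g A IA /\ integral_is g A0 IA0 /\
           integral_is g A1 IA1 /\
           lam / 2 * IA <= IA0 <= 1 / (2 * lam) * IA /\
           lam / 2 * IA <= IA1 <= 1 / (2 * lam) * IA) /\
        (* (3) r_n = (-1)^i on A_i, almost everywhere *)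
        outer_measure_is (fun x => A0 x /\ rademacher n x <> 1) 0 /\
        outer_measure_is (fun x => A1 x /\ rademacher n x <> -1) 0.
Proof.
  intros Hg HA Hlam.
  destruct (parity_part_integral g m A lam Hg HA Hlam) as [N HN].
  exists (max N (S m)). split; [lia|]. intros n Hn.
  exists (parity_part n A 0), (parity_part n A 1).
  split; [apply (parity_part_dyadic m); auto; lia|].
  split; [apply (parity_part_dyadic m); auto; lia|].
  split; [intros x; split; [apply (parity_part_cover m); auto|intros [[? _]|[? _]]; auto]|].
  split; [apply parity_part_disjoint|].
  split; [apply (parity_part_measure m); auto; lia|].
  split; [apply HN; lia|].
  split; apply (dyadic_points_null _ n); intros x [Hx Hr].
  - apply (parity_part_rademacher n A 0 x Hx). exact Hr.
  - apply (parity_part_rademacher n A 1 x Hx). simpl. rewrite Rmult_1_r. exact Hr.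
Qed.
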